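(* Let $Q=[0,L]\times[0,1]$ with $L\ge1$, uniform density $\phi\equiv1$, $n=2$ generators, and $\mathcal H(p_1,p_2)=\int_Q\min_{i=1,2}\|q-p_i\|^2dq$. Consider the centroidal Voronoi configuration $p_1=(L/2,1/4)$, $p_2=(L/2,3/4)$, whose Voronoi cells are the two halves of $Q$ separated by the segment joining the midpoints of the two sides of length 1. If $L>\sqrt{3/2}$, the Hessian $\nabla^2\mathcal H$ at this configuration has exactly one negative eigenvalue; if $L=\sqrt{3/2}$, it has a zero eigenvalue.
   Context: The Voronoi cell of $p_i$ is $V_i=\{q\in Q:\|q-p_i\|\le\|q-p_j\|\ \forall j\}$; a configuration is centroidal if each $p_i$ is the centroid of $V_i$. The Hessian is with respect to $(p_1,p_2)\in\mathbb{R}^4$. *)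

From Stdlib Require Import Reals Lra Lia.
Open Scope R_scope.

(* Points of R^4 = (x1,y1,x2,y2) are represented as functions nat -> R,
   only indices 0..3 being relevant: p1 = (v 0, v 1), p2 = (v 2, v 3). *)

Definition IsRInt (f : R -> R) (a b v : R) : Prop :=
  exists pr : Riemann_integrable f a b, RiemannInt pr = v.

Definition cvt_integrand (v : nat -> R) (x y : R) : R :=
  Rmin ((x - v 0%nat)^2 + (y - v 1%nat)^2) ((x - v 2%nat)^2 + (y - v 3%nat)^2).

(* Hf v is the integral of the integrand over Q = [0,L] x [0,1]
   (computed as an iterated Riemann integral; the integrand is continuous). *)
Definition IsCVTEnergy (L : R) (Hf : (nat -> R) -> R) : Prop :=
  forall v : nat -> R, exists g : R -> R,
    (forall x, 0 <= x <= L -> IsRInt (fun y => cvt_integrand v x y) 0 1 (g x)) /\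
    IsRInt g 0 L (Hf v).

Definition upd (v : nat -> R) (i : nat) (t : R) : nat -> R :=
  fun k => if Nat.eqb k i then t else v k.

Definition partial (f : (nat -> R) -> R) (v : nat -> R) (i : nat) (l : R) : Prop :=
  derivable_pt_lim (fun t => f (upd v i t)) (v i) l.

Definition IsHessian4 (f : (nat -> R) -> R) (v : nat -> R) (M : nat -> nat -> R) : Prop :=
  exists G : nat -> (nat -> R) -> R, exists d : R, 0 < d /\
    (forall w : nat -> R, (forall k, (k < 4)%nat -> Rabs (w k - v k) < d) ->
       forall i, (i < 4)%nat -> partial f w i (G i w)) /\
    (forall i j, (i < 4)%nat -> (j < 4)%nat -> partial (G i) v j (M i j)).

Definition minor (j : nat) (M : nat -> nat -> R) : nat -> nat -> R :=
  fun i k => M (S i) (if Nat.ltb k j then k else S k).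

Fixpoint detn (n : nat) (M : nat -> nat -> R) : R :=
  match n with
  | O => 1
  | S m => sum_f_R0 (fun j => (-1)^j * M 0%nat j * detn m (minor j M)) m
  end.

Definition charpoly4 (M : nat -> nat -> R) (t : R) : R :=
  detn 4 (fun i j => (if Nat.eqb i j then t else 0) - M i j).

Definition is_eigenvalue4 (M : nat -> nat -> R) (lam : R) : Prop :=
  charpoly4 M lam = 0.

Definition simple_eigenvalue4 (M : nat -> nat -> R) (lam : R) : Prop :=
  is_eigenvalue4 M lam /\
  exists d : R, derivable_pt_lim (charpoly4 M) lam d /\ d <> 0.

(* Exactly one negative eigenvalue, counted with (algebraic) multiplicity. *)
Definition exactly_one_negative_eigenvalue4 (M : nat -> nat -> R) : Prop :=
  exists lam : R, lam < 0 /\ simple_eigenvalue4 M lam /\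
    (forall mu : R, mu < 0 -> is_eigenvalue4 M mu -> mu = lam).

Definition config (L : R) : nat -> R :=
  fun k => match k with
           | 0%nat => L / 2
           | 1%nat => 1 / 4
           | 2%nat => L / 2
           | _ => 3 / 4
           end.

(* Near the configuration the perpendicular bisector of p1 and p2 is a line
   y = a + b x crossing both vertical sides of Q, with p1 below it.  Integrating
   column by column gives H in closed form in terms of the mass and moments of the
   lower cell.  Since the integrand is continuous across the bisector, this closed
   form is stationary in (a, b) on the bisector, so the motion of the bisector does
   not contribute to the gradient: dH/dp_i = 2 |V_i| (p_i - c_i).  Differentiating
   once more at the symmetric configuration, the Hessian has characteristic
   polynomial (t - L)^2 (t - L/2) (t - (L - 2 L^3 / 3)), whose last root is negative
   for L^2 > 3/2 and vanishes for L^2 = 3/2. *)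

From Stdlib Require Import Reals Lra Lia.
From Coquelicot Require Import Coquelicot.
Open Scope R_scope.

Definition bis_intercept (x1 y1 x2 y2 : R) : R := (x2^2 + y2^2 - x1^2 - y1^2) / (2 * (y2 - y1)).
Definition bis_slope (x1 y1 x2 y2 : R) : R := (x1 - x2) / (y2 - y1).

Lemma dist2_sub_bisector (x1 y1 x2 y2 x y : R) : y2 - y1 <> 0 ->
  ((x - x2)^2 + (y - y2)^2) - ((x - x1)^2 + (y - y1)^2)
  = 2 * (y2 - y1) * (bis_intercept x1 y1 x2 y2 + bis_slope x1 y1 x2 y2 * x - y).
Proof. intros H. unfold bis_intercept, bis_slope. field. exact H. Qed.

(* Integral over y in [0, 1] of |q - p1|^2 below the cut height h and of
   |q - p2|^2 above it, for the column at abscissa x. *)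
Definition column_energy (a b x1 y1 x2 y2 x : R) : R :=
  let h := a + b * x in
  (x - x1)^2 * h + ((h - y1)^3 + y1^3) / 3 + (x - x2)^2 * (1 - h) + ((1 - y2)^3 - (h - y2)^3) / 3.

(* For h x = a + b x: cut_mass, cut_moment and cut_sq are the integrals over
   [0, L] of h, x h and h^2, i.e. the area, x-moment and twice the y-moment of
   the part of Q below the cut. *)
Definition cut_mass (L a b : R) : R := a * L + b * L^2 / 2.
Definition cut_moment (L a b : R) : R := a * L^2 / 2 + b * L^3 / 3.
Definition cut_sq (L a b : R) : R := a^2 * L + a * b * L^2 + b^2 * L^3 / 3.

(* The integral of column_energy over [0, L] (see is_derive_split_energy). *)
Definition split_energy (L a b x1 y1 x2 y2 : R) : R :=
  (x1^2 + y1^2 - x2^2 - y2^2) * cut_mass L a b - 2 * (x1 - x2) * cut_moment L a b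
  + (y2 - y1) * cut_sq L a b + ((L - x2)^3 + x2^3) / 3 + L * ((1 - y2)^3 + y2^3) / 3.

Lemma is_derive_split_energy (a b x1 y1 x2 y2 x : R) :
  is_derive (fun L => split_energy L a b x1 y1 x2 y2) x (column_energy a b x1 y1 x2 y2 x).
Proof.
  unfold split_energy, cut_mass, cut_moment, cut_sq, column_energy. auto_derive; [easy | field].
Qed.

Lemma is_RInt_of_is_derive (F f : R -> R) (a b : R) :
  (forall x, is_derive F x (f x)) -> (forall x, ex_derive f x) -> is_RInt f a b (F b - F a).
Proof.
  intros HF Hf. apply (is_RInt_derive F f); intros x _; [exact (HF x)|].
  exact (ex_derive_continuous f x (Hf x)).
Qed.

Lemma is_RInt_Rmin_split (f g : R -> R) (a c b u v : R) : a <= c <= b ->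
  (forall y, a <= y <= c -> f y <= g y) -> (forall y, c <= y <= b -> g y <= f y) ->
  is_RInt f a c u -> is_RInt g c b v -> is_RInt (fun y => Rmin (f y) (g y)) a b (u + v).
Proof.
  intros Hc Hfg Hgf If Ig. apply (is_RInt_Chasles _ a c b u v).
  - apply (is_RInt_ext f); [|exact If]. intros y Hy.
    rewrite Rmin_left, Rmax_right in Hy by lra. rewrite Rmin_left; [easy|]. apply Hfg; lra.
  - apply (is_RInt_ext g); [|exact Ig]. intros y Hy.
    rewrite Rmin_left, Rmax_right in Hy by lra. rewrite Rmin_right; [easy|]. apply Hgf; lra.
Qed.

Lemma is_RInt_column (x1 y1 x2 y2 x : R) : y1 < y2 ->
  0 <= bis_intercept x1 y1 x2 y2 + bis_slope x1 y1 x2 y2 * x <= 1 ->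
  is_RInt (fun y => Rmin ((x - x1)^2 + (y - y1)^2) ((x - x2)^2 + (y - y2)^2)) 0 1
    (column_energy (bis_intercept x1 y1 x2 y2) (bis_slope x1 y1 x2 y2) x1 y1 x2 y2 x).
Proof.
  intros Hy Hh. set (h := bis_intercept x1 y1 x2 y2 + bis_slope x1 y1 x2 y2 * x) in *.
  assert (Hdiff : forall y, ((x - x2)^2 + (y - y2)^2) - ((x - x1)^2 + (y - y1)^2)
                            = 2 * (y2 - y1) * (h - y)).
  { intros y. apply dist2_sub_bisector. lra. }
  replace (column_energy _ _ _ _ _ _ x)
    with (((x - x1)^2 * h + (h - y1)^3 / 3 - ((x - x1)^2 * 0 + (0 - y1)^3 / 3))
          + ((x - x2)^2 * 1 + (1 - y2)^3 / 3 - ((x - x2)^2 * h + (h - y2)^3 / 3)))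
    by (unfold column_energy, h; field).
  apply (is_RInt_Rmin_split _ _ 0 h 1); try (intros y Hy'; specialize (Hdiff y); nra); try lra;
    apply (is_RInt_of_is_derive (fun y => (x - _)^2 * y + (y - _)^3 / 3));
    intros; auto_derive; try easy; field.
Qed.

Definition voronoi_energy (L x1 y1 x2 y2 : R) : R :=
  split_energy L (bis_intercept x1 y1 x2 y2) (bis_slope x1 y1 x2 y2) x1 y1 x2 y2.

(* 2 |V_i| (p_i - c_i), written with the mass and moments of the lower cell V_1. *)
Definition voronoi_grad (L x1 y1 x2 y2 : R) (i : nat) : R :=
  let a := bis_intercept x1 y1 x2 y2 in let b := bis_slope x1 y1 x2 y2 in
  let m := cut_mass L a b in let mx := cut_moment L a b in let q := cut_sq L a b in
  match i with
  | 0%nat => 2 * (x1 * m - mx)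
  | 1%nat => 2 * y1 * m - q
  | 2%nat => 2 * (x2 * (L - m) - (L^2 / 2 - mx))
  | _ => 2 * y2 * (L - m) - (L - q)
  end.

Lemma is_derive_voronoi_energy_along (L : R) (x1 y1 x2 y2 : R -> R) (t : R) :
  ex_derive x1 t -> ex_derive y1 t -> ex_derive x2 t -> ex_derive y2 t -> y2 t - y1 t <> 0 ->
  is_derive (fun s => voronoi_energy L (x1 s) (y1 s) (x2 s) (y2 s)) t
    (voronoi_grad L (x1 t) (y1 t) (x2 t) (y2 t) 0 * Derive x1 t
     + voronoi_grad L (x1 t) (y1 t) (x2 t) (y2 t) 1 * Derive y1 t
     + voronoi_grad L (x1 t) (y1 t) (x2 t) (y2 t) 2 * Derive x2 t
     + voronoi_grad L (x1 t) (y1 t) (x2 t) (y2 t) 3 * Derive y2 t).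
Proof.
  intros D1 D2 D3 D4 Hy.
  unfold voronoi_energy, voronoi_grad, split_energy, cut_mass, cut_moment, cut_sq,
    bis_intercept, bis_slope.
  auto_derive.
  - repeat split; auto; intro; apply Hy; lra.
  - change (fun s : R => x1 s) with x1; change (fun s : R => y1 s) with y1;
    change (fun s : R => x2 s) with x2; change (fun s : R => y2 s) with y2.
    (* the terms carrying the derivatives of the bisector coefficients cancel *)
    field. intro; apply Hy; lra.
Qed.

Lemma upd_self (w : nat -> R) (i k : nat) : upd w i (w i) k = w k.
Proof. unfold upd. destruct (Nat.eqb_spec k i); congruence. Qed.

Lemma ex_derive_upd (w : nat -> R) (i k : nat) (t : R) : ex_derive (fun s => upd w i s k) t.
Proof. unfold upd. destruct (k =? i)%nat; auto_derive; easy. Qed.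

Lemma Derive_upd (w : nat -> R) (i k : nat) (t : R) :
  Derive (fun s => upd w i s k) t = if (k =? i)%nat then 1 else 0.
Proof. unfold upd. destruct (k =? i)%nat; [apply Derive_id | apply Derive_const]. Qed.

Lemma is_derive_voronoi_energy_upd (L : R) (w : nat -> R) (i : nat) : (i < 4)%nat ->
  w 3%nat - w 1%nat <> 0 ->
  is_derive (fun t => voronoi_energy L (upd w i t 0) (upd w i t 1) (upd w i t 2) (upd w i t 3))
    (w i) (voronoi_grad L (w 0%nat) (w 1%nat) (w 2%nat) (w 3%nat) i).
Proof.
  intros Hi Hy.
  pose proof (is_derive_voronoi_energy_along L (fun s => upd w i s 0) (fun s => upd w i s 1)
    (fun s => upd w i s 2) (fun s => upd w i s 3) (w i)) as H.
  cbv beta in H. rewrite !upd_self, !Derive_upd in H.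
  specialize (H (ex_derive_upd _ _ _ _) (ex_derive_upd _ _ _ _) (ex_derive_upd _ _ _ _)
                (ex_derive_upd _ _ _ _) Hy).
  destruct i as [|[|[|[|i]]]]; try lia; simpl Nat.eqb in H;
    rewrite ?Rmult_1_r, ?Rmult_0_r, ?Rplus_0_l, ?Rplus_0_r in H; exact H.
Qed.

Lemma is_RInt_of_IsRInt (f : R -> R) (a b v : R) : IsRInt f a b v -> is_RInt f a b v.
Proof.
  intros [pr <-]. rewrite <- RInt_Reals. exact (RInt_correct f a b (ex_RInt_Reals_1 f a b pr)).
Qed.

Lemma IsRInt_unique (f : R -> R) (a b v v' : R) : IsRInt f a b v -> is_RInt f a b v' -> v = v'.
Proof.
  intros H H'. rewrite <- (is_RInt_unique _ _ _ _ (is_RInt_of_IsRInt _ _ _ _ H)).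
  exact (is_RInt_unique _ _ _ _ H').
Qed.

Lemma split_energy_0 (a b x1 y1 x2 y2 : R) : split_energy 0 a b x1 y1 x2 y2 = 0.
Proof. unfold split_energy, cut_mass, cut_moment, cut_sq. field. Qed.

Lemma cvt_energy_eq_voronoi_energy (L : R) (Hf : (nat -> R) -> R) (w : nat -> R) :
  0 <= L -> IsCVTEnergy L Hf -> w 1%nat < w 3%nat ->
  (forall x, 0 <= x <= L ->
     0 <= bis_intercept (w 0%nat) (w 1%nat) (w 2%nat) (w 3%nat)
          + bis_slope (w 0%nat) (w 1%nat) (w 2%nat) (w 3%nat) * x <= 1) ->
  Hf w = voronoi_energy L (w 0%nat) (w 1%nat) (w 2%nat) (w 3%nat).
Proof.
  intros HL hH Hy Hstrip. destruct (hH w) as [g [Hg Hint]].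
  set (a := bis_intercept (w 0%nat) (w 1%nat) (w 2%nat) (w 3%nat)) in *.
  set (b := bis_slope (w 0%nat) (w 1%nat) (w 2%nat) (w 3%nat)) in *.
  apply (IsRInt_unique g 0 L); [exact Hint|].
  assert (E : voronoi_energy L (w 0%nat) (w 1%nat) (w 2%nat) (w 3%nat) =
    split_energy L a b (w 0%nat) (w 1%nat) (w 2%nat) (w 3%nat)
          - split_energy 0 a b (w 0%nat) (w 1%nat) (w 2%nat) (w 3%nat)).
  { unfold voronoi_energy. fold a b. rewrite split_energy_0. ring. }
  rewrite E.
  apply (is_RInt_ext (column_energy a b (w 0%nat) (w 1%nat) (w 2%nat) (w 3%nat))).
  - intros x Hx. rewrite Rmin_left, Rmax_right in Hx by lra.
    symmetry. apply (IsRInt_unique (fun y => cvt_integrand w x y) 0 1); [apply Hg; lra|].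
    apply is_RInt_column; [exact Hy | apply Hstrip; lra].
  - apply (is_RInt_of_is_derive
      (fun X => split_energy X a b (w 0%nat) (w 1%nat) (w 2%nat) (w 3%nat)));
      intros x; [apply is_derive_split_energy|].
    unfold column_energy. auto_derive. easy.
Qed.

Definition near_config (L : R) (w : nat -> R) : Prop :=
  forall k, (k < 4)%nat -> Rabs (w k - config L k) < / (100 * L).

Lemma bisector_in_unit_strip (L x1 y1 x2 y2 : R) : 1 <= L ->
  Rabs (x1 - L / 2) < / (100 * L) -> Rabs (y1 - 1 / 4) < / (100 * L) ->
  Rabs (x2 - L / 2) < / (100 * L) -> Rabs (y2 - 3 / 4) < / (100 * L) ->
  y1 < y2 /\ forall x, 0 <= x <= L ->
    0 <= bis_intercept x1 y1 x2 y2 + bis_slope x1 y1 x2 y2 * x <= 1.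
Proof.
  intros HL H1 H2 H3 H4. set (d := / (100 * L)) in *.
  assert (Hd : 0 < d) by (unfold d; apply Rinv_0_lt_compat; lra).
  assert (HdL : d * L = 1 / 100) by (unfold d; field; lra).
  assert (Hd1 : d <= 1 / 100) by nra.
  apply Rabs_def2 in H1, H2, H3, H4.
  split; [lra|]. intros x Hx.
  set (h := bis_intercept x1 y1 x2 y2 + bis_slope x1 y1 x2 y2 * x).
  assert (Htilt : Rabs ((x2 - x1) * (x1 + x2 - 2 * x)) <= 3 / 100).
  { rewrite Rabs_mult.
    assert (Rabs (x2 - x1) <= 2 * d) by (apply Rabs_le; lra).
    assert (Rabs (x1 + x2 - 2 * x) <= L + 2 * d) by (apply Rabs_le; lra).
    assert (Rabs (x2 - x1) * Rabs (x1 + x2 - 2 * x) <= 2 * d * (L + 2 * d))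
      by (apply Rmult_le_compat; auto using Rabs_pos).
    nra. }
  apply Rabs_le_between in Htilt.
  assert (Hh : 2 * (y2 - y1) * h = (x2 - x1) * (x1 + x2 - 2 * x) + (y2 - y1) * (y1 + y2))
    by (unfold h, bis_intercept, bis_slope; field; lra).
  assert (0 <= (y2 - y1 - 48 / 100) * (y1 + y2 - 98 / 100)) by (apply Rmult_le_pos; lra).
  assert (0 <= (y2 - y1 - 48 / 100) * (2 - (y1 + y2) - 98 / 100)) by (apply Rmult_le_pos; lra).
  split; nra.
Qed.

Lemma near_config_strip (L : R) (w : nat -> R) : 1 <= L -> near_config L w ->
  w 1%nat < w 3%nat /\ forall x, 0 <= x <= L ->
    0 <= bis_intercept (w 0%nat) (w 1%nat) (w 2%nat) (w 3%nat)
         + bis_slope (w 0%nat) (w 1%nat) (w 2%nat) (w 3%nat) * x <= 1.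
Proof.
  intros HL Hw. apply bisector_in_unit_strip; [exact HL | apply (Hw 0%nat) | apply (Hw 1%nat)
                                              | apply (Hw 2%nat) | apply (Hw 3%nat)]; lia.
Qed.

Lemma near_config_upd (L : R) (w : nat -> R) (i : nat) : near_config L w ->
  locally (w i) (fun t => near_config L (upd w i t)).
Proof.
  intros Hw.
  destruct (Nat.lt_ge_cases i 4) as [Hi | Hi].
  2:{ exists (mkposreal 1 Rlt_0_1). intros t _ k Hk. unfold upd.
      replace (k =? i)%nat with false by (symmetry; apply Nat.eqb_neq; lia). now apply Hw. }
  assert (He : 0 < / (100 * L) - Rabs (w i - config L i)) by (specialize (Hw i Hi); lra).
  exists (mkposreal _ He). intros t Ht k Hk. unfold upd.
  destruct (Nat.eqb_spec k i) as [-> | _]; [|now apply Hw].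
  change (Rabs (t - w i) < / (100 * L) - Rabs (w i - config L i)) in Ht.
  replace (t - config L i) with ((t - w i) + (w i - config L i)) by ring.
  eapply Rle_lt_trans; [apply Rabs_triang | lra].
Qed.

Lemma partial_cvt_energy (L : R) (Hf : (nat -> R) -> R) (w : nat -> R) (i : nat) :
  1 <= L -> IsCVTEnergy L Hf -> near_config L w -> (i < 4)%nat ->
  partial Hf w i (voronoi_grad L (w 0%nat) (w 1%nat) (w 2%nat) (w 3%nat) i).
Proof.
  intros HL hH Hw Hi. unfold partial. apply is_derive_Reals.
  apply (is_derive_ext_loc
    (fun t => voronoi_energy L (upd w i t 0) (upd w i t 1) (upd w i t 2) (upd w i t 3))).
  - eapply filter_imp; [|exact (near_config_upd L w i Hw)]. intros t Ht.
    destruct (near_config_strip L _ HL Ht) as [Hy Hstrip].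
    symmetry. apply cvt_energy_eq_voronoi_energy; auto; lra.
  - apply is_derive_voronoi_energy_upd; [exact Hi|].
    destruct (near_config_strip L w HL Hw). lra.
Qed.

Definition config_hessian (L : R) (i j : nat) : R :=
  match i, j with
  | 0, 0 | 2, 2 => L - L^3 / 3
  | 0, 2 | 2, 0 => L^3 / 3
  | 1, 1 | 3, 3 => 3 * L / 4
  | 1, 3 | 3, 1 => - (L / 4)
  | _, _ => 0
  end.

Lemma partial_voronoi_grad_config (L : R) (i j : nat) : (i < 4)%nat -> (j < 4)%nat ->
  partial (fun w => voronoi_grad L (w 0%nat) (w 1%nat) (w 2%nat) (w 3%nat) i) (config L) j
    (config_hessian L i j).
Proof.
  intros Hi Hj. unfold partial. apply is_derive_Reals.
  destruct i as [|[|[|[|i]]]]; try lia; destruct j as [|[|[|[|j]]]]; try lia;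
    unfold upd, config, voronoi_grad, cut_mass, cut_moment, cut_sq, bis_intercept, bis_slope,
      config_hessian; simpl; auto_derive; try (repeat split; intro; lra); field.
Qed.

Lemma charpoly4_config_hessian (L t : R) :
  charpoly4 (config_hessian L) t = (t - L) * (t - L) * (t - L / 2) * (t - (L - 2 * L^3 / 3)).
Proof. unfold charpoly4. simpl. unfold minor. simpl. field. Qed.

Lemma exactly_one_negative_eigenvalue4_of_charpoly (M : nat -> nat -> R) (l1 l2 l3 l4 : R) :
  0 <= l1 -> 0 <= l2 -> 0 <= l3 -> l4 < 0 ->
  (forall t, charpoly4 M t = (t - l1) * (t - l2) * (t - l3) * (t - l4)) ->
  exactly_one_negative_eigenvalue4 M.
Proof.
  intros H1 H2 H3 H4 Hchar. exists l4. split; [exact H4|]. split; [split|].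
  - unfold is_eigenvalue4. rewrite Hchar. ring.
  - exists ((l4 - l1) * (l4 - l2) * (l4 - l3)). split.
    + apply is_derive_Reals.
      apply (is_derive_ext (fun t => (t - l1) * (t - l2) * (t - l3) * (t - l4))).
      { intros t. symmetry. apply Hchar. }
      auto_derive; [easy | ring].
    + repeat apply Rmult_integral_contrapositive_currified; lra.
  - intros mu Hmu Hev. unfold is_eigenvalue4 in Hev. rewrite Hchar in Hev.
    repeat (apply Rmult_integral in Hev; destruct Hev as [Hev | Hev]); lra.
Qed.

Theorem mainTheorem9 (L : R) (hL : 1 <= L) (Hf : (nat -> R) -> R)
  (hH : IsCVTEnergy L Hf) :
  exists M : nat -> nat -> R,
    IsHessian4 Hf (config L) M /\
    (L > sqrt (3 / 2) -> exactly_one_negative_eigenvalue4 M) /\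
    (L = sqrt (3 / 2) -> is_eigenvalue4 M 0).
Proof.
  assert (Hsqrt : sqrt (3 / 2) * sqrt (3 / 2) = 3 / 2) by (apply sqrt_sqrt; lra).
  assert (Hcube : L - 2 * L^3 / 3 = L * (3 / 2 - L * L) * (2 / 3)) by field.
  exists (config_hessian L). split; [|split].
  - exists (fun i w => voronoi_grad L (w 0%nat) (w 1%nat) (w 2%nat) (w 3%nat) i), (/ (100 * L)).
    split; [apply Rinv_0_lt_compat; lra | split].
    + intros w Hw i Hi. exact (partial_cvt_energy L Hf w i hL hH Hw Hi).
    + exact (partial_voronoi_grad_config L).
  - intros HL.
    apply (exactly_one_negative_eigenvalue4_of_charpoly _ L L (L / 2) (L - 2 * L^3 / 3));
      try lra; [|exact (charpoly4_config_hessian L)].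
    assert (HL2 : 3 / 2 < L * L) by (pose proof (sqrt_pos (3 / 2)); nra).
    rewrite Hcube. assert (0 < L * (L * L - 3 / 2)) by (apply Rmult_lt_0_compat; lra). nra.
  - intros HL. unfold is_eigenvalue4. rewrite charpoly4_config_hessian, Hcube.
    assert (HL2 : L * L = 3 / 2) by (rewrite HL; exact Hsqrt). rewrite HL2. field.
Qed.
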